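(* Let $G$ be a mean-payoff game with limited-observation and $\Gamma_G$ its associated reachability game. If $\lambda$ is a winning strategy for Adam or for Eve in $\Gamma_G$, then there exists $N\in\mathbb{N}$ such that every play $\pi$ in $\Gamma_G$ consistent with $\lambda$ has length $|\pi|\le N$.
   Context: An MPG with limited-observation is a tuple $G=\langle Q,q_I,\Sigma,\Delta,w,Obs\rangle$: $Q$ finite, $q_I\in Q$, $\Sigma$ finite, $\Delta\subseteq Q\times\Sigma\times Q$ total, $w:\Delta\to\mathbb{Z}$, $Obs$ a partition of $Q$ with $\{q_I\}\in Obs$ and $\mathrm{post}_\sigma(o)=\{q':\exists q\in o,(q,\sigma,q')\in\Delta\}$ a union of elements of $Obs$ for all $o,\sigma$. Reachability game $\Gamma_G$: $\mathcal{F}$ is the set of $f:Q\to\mathbb{Z}\cup\{+\infty,\bot\}$, $\mathrm{supp}(f)=\{q:f(q)\ne\bot\}$; $f'$ is a $\sigma$-successor of $f$ if $\mathrm{supp}(f')\in Obs$, $\mathrm{supp}(f')\subseteq\mathrm{post}_\sigma(\mathrm{supp}(f))$ and each $f'(q)$, $q\in\mathrm{supp}(f')$, is $\min\{f(q')+w(q',\sigma,q):q'\in\mathrm{supp}(f),(q',\sigma,q)\in\Delta\}$ or $+\infty$. $f\preceq_k f'$ iff $\mathrm{supp}(f)=\mathrm{supp}(f')$ and $f(q)+k\le f'(q)$ on the support ($+\infty+k=+\infty$). $f_I(q_I)=0$, else $\bot$. $\Pi_G$: sequences $f_0\sigma_0\ldots f_n$ with $f_0=f_I$, $f_{i+1}$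 a $\sigma_i$-successor of $f_i$, and $f_i\not\preceq_0f_j$, $f_j\not\preceq_1 f_i$ for $0\le i<j<n$. $\mathcal{T}_\exists$: such sequences with $f_i\preceq_0 f_n$ for some $i<n$; $\mathcal{T}_\forall$: such sequences with, for some $i<n$, $f_n\preceq_1 f_i$ and $f_i(q)\ne+\infty$ for some $q\in\mathrm{supp}(f_i)$. $\Gamma_G$ is played on the tree $\Pi_G$ from $f_I$: at the current sequence $x$, Eve picks $\sigma\in\Sigma$ and Adam picks $f$ with $x\sigma f\in\Pi_G$; the play stops (as a finite play) once it reaches $\mathcal{T}_\exists$ (Eve wins) or $\mathcal{T}_\forall$ (Adam wins); otherwise it may be infinite and won by nobody. A strategy is winning for Eve (Adam) if every play consistent with it reaches $\mathcal{T}_\exists$ ($\mathcal{T}_\forall$). *)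

From mathcomp Require Import all_boot all_order all_algebra.
Set Implicit Arguments. Unset Strict Implicit. Unset Printing Implicit Defensive.
Import Order.TTheory GRing.Theory Num.Theory.
Local Open Scope ring_scope.

Inductive ext := Bot | Fin of int | PInf.

Definition isbot (e : ext) : bool := if e is Bot then true else false.
Definition isinf (e : ext) : bool := if e is PInf then true else false.

Definition eadd (e : ext) (k : int) : ext :=
  match e with Fin z => Fin (z + k) | x => x end.

Definition emin (x y : ext) : ext :=
  match x, y with
  | Fin a, Fin b => Fin (Order.min a b)
  | Fin a, _ => Fin a
  | _, Fin b => Fin b
  | PInf, _ => y
  | Bot, _ => y
  end.

Definition ele (x y : ext) : bool :=
  match x, y with
  | _, PInf => true
  | Fin a, Fin b => a <= b
  | _, _ => false
  end.

Record mpglo := MPGLO {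
  Q : finType;
  qI : Q;
  Sig : finType;
  Delta : Q -> Sig -> Q -> bool;
  wt : Q -> Sig -> Q -> int;          (* weights (only used on Delta) *)
  Obs : {set {set Q}}
}.

Section Game.
Variable G : mpglo.
Local Notation Q := (Q G).
Local Notation Sig := (Sig G).
Local Notation Delta := (@Delta G).
Local Notation Obs := (Obs G).

Definition post (s : Sig) (o : {set Q}) : {set Q} :=
  [set q' | [exists q in o, Delta q s q']].

Definition wf_mpglo : Prop :=
  (forall q s, exists q', Delta q s q') /\
  partition Obs [set: Q] /\
  [set @qI G] \in Obs /\
  (forall o s, o \in Obs -> exists2 U : {set {set Q}}, U \subset Obs & post s o = cover U).

Definition F := Q -> ext.

Definition supp (f : F) : {set Q} := [set q | ~~ isbot (f q)].

Definition minval (f : F) (s : Sig) (q : Q) : ext :=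
  \big[emin/PInf]_(q' | (q' \in supp f) && Delta q' s q) eadd (f q') (@wt G q' s q).

Definition successor (f : F) (s : Sig) (f' : F) : Prop :=
  supp f' \in Obs /\ supp f' \subset post s (supp f) /\
  (forall q, q \in supp f' -> f' q = minval f s q \/ f' q = PInf).

Definition preceq (k : int) (f f' : F) : Prop :=
  supp f = supp f' /\ (forall q, q \in supp f -> ele (eadd (f q) k) (f' q)).

Definition fI : F := fun q => if q == @qI G then Fin 0 else Bot.

(* A history f_0 s_0 f_1 ... s_{n-1} f_n with f_0 = fI is represented by the
   list [:: (s_0, f_1); ...; (s_{n-1}, f_n)]; its length n is the size. *)
Definition hist := seq (Sig * F).

Definition fseq (h : hist) : seq F := fI :: map snd h.
Definition fat (h : hist) (i : nat) : F := nth fI (fseq h) i.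

Fixpoint succ_path (f : F) (h : hist) : Prop :=
  match h with
  | [::] => True
  | (s, f') :: h' => successor f s f' /\ succ_path f' h'
  end.

Definition inPi (h : hist) : Prop :=
  succ_path fI h /\
  (forall i j, (i < j)%N -> (j < size h)%N ->
     ~ preceq 0 (fat h i) (fat h j) /\ ~ preceq 1 (fat h j) (fat h i)).

Definition TE (h : hist) : Prop :=
  inPi h /\ exists2 i, (i < size h)%N & preceq 0 (fat h i) (fat h (size h)).

Definition TA (h : hist) : Prop :=
  inPi h /\ exists2 i, (i < size h)%N &
    preceq 1 (fat h (size h)) (fat h i) /\
    exists2 q, q \in supp (fat h i) & fat h i q <> PInf.

Inductive strategy :=
  | EveStrat of (hist -> Sig)
  | AdamStrat of (hist -> Sig -> F).

Definition move_ok (l : strategy) (x : hist) (s : Sig) (f : F) : Prop :=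
  ~ TE x /\ ~ TA x /\ inPi (rcons x (s, f)) /\
  match l with
  | EveStrat e => s = e x
  | AdamStrat a => f = a x s
  end.

Definition consistent (l : strategy) (h : hist) : Prop :=
  forall h1 s f h2, h = h1 ++ (s, f) :: h2 -> move_ok l h1 s f.

Inductive play :=
  | FinPlay of hist
  | InfPlay of (nat -> Sig * F).

Definition is_play (l : strategy) (p : play) : Prop :=
  match p with
  | FinPlay h => consistent l h /\ ~ (exists s f, move_ok l h s f)
  | InfPlay u => forall n, move_ok l (mkseq u n) (u n).1 (u n).2
  end.

Definition reaches (T : hist -> Prop) (p : play) : Prop :=
  match p with
  | FinPlay h => exists2 i, (i <= size h)%N & T (take i h)
  | InfPlay u => exists n, T (mkseq u n)
  end.

Definition winning (l : strategy) : Prop :=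
  match l with
  | EveStrat _ => forall p, is_play l p -> reaches TE p
  | AdamStrat _ => forall p, is_play l p -> reaches TA p
  end.

Definition play_len_le (p : play) (N : nat) : Prop :=
  match p with
  | FinPlay h => (size h <= N)%N
  | InfPlay _ => False
  end.

End Game.

(* A winning strategy has no infinite consistent play: such a play would have
   to pass through T_exists or T_forall, where the game stops. From any history
   there are only finitely many moves, since a sigma-successor of the current
   function is determined by sigma, its support and the set of states where it
   is +oo. Koenig's lemma then bounds the length of all consistent plays. *)
From mathcomp Require Import all_boot all_order all_algebra.
From Stdlib Require Import Classical ClassicalEpsilon FunctionalExtensionality.

Set Implicit Arguments.
Unset Strict Implicit.
Unset Printing Implicit Defensive.

Section Koenig.

Variables (A : Type) (K : finType) (ok : seq A -> A -> Prop).
Variable code : seq A -> K -> A.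
Hypothesis ok_code : forall h a, ok h a -> exists k, a = code h k.

Definition valid_hist (h : seq A) : Prop :=
  forall h1 a h2, h = h1 ++ a :: h2 -> ok h1 a.

Definition extendable (h : seq A) : Prop :=
  forall n, exists2 t, valid_hist (h ++ t) & (n <= size t)%N.

Lemma extendable_step h :
  extendable h -> exists a, ok h a /\ extendable (rcons h a).
Proof.
move=> ext_h; apply: NNPP => no_step.
have bounded k : exists n, forall t,
    valid_hist (rcons h (code h k) ++ t) -> (size t < n)%N.
  apply: NNPP => unbounded; apply: no_step; exists (code h k).
  have ext_k : extendable (rcons h (code h k)).
    move=> n; apply: NNPP => no_ext; apply: unbounded; exists n => t valid_t.
    by rewrite ltnNge; apply/negP => le_n; apply: no_ext; exists t.
  split=> //; have [t valid_t _] := ext_k 0%N.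
  by apply: (valid_t h _ t); rewrite cat_rcons.
have [n bound] := fin_all_exists bounded.
have [[|a t] valid_at //= lt_max] := ext_h (\max_k n k).+1.
have [k a_code] := ok_code (valid_at h a t erefl).
have lt_nk := bound k t; rewrite cat_rcons -a_code in lt_nk.
move/(_ valid_at) in lt_nk.
by have := leq_trans lt_nk (leq_bigmax k); rewrite ltnNge -ltnS lt_max.
Qed.

Lemma extendable_path :
  extendable [::] -> exists u : nat -> A, forall n, ok (mkseq u n) (u n).
Proof.
move=> ext_nil.
pose S := {h | extendable h}.
pose ch (x : S) :=
  constructive_indefinite_description _ (extendable_step (proj2_sig x)).
pose next (x : S) : S :=
  exist _ (rcons (proj1_sig x) (proj1_sig (ch x))) (proj2 (proj2_sig (ch x))).
pose hs n := iter n next (exist _ [::] ext_nil).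
exists (fun n => proj1_sig (ch (hs n))) => n.
have -> : mkseq (fun n => proj1_sig (ch (hs n))) n = proj1_sig (hs n).
  by elim: n => [|n IH] //; rewrite mkseqS IH.
exact: proj1 (proj2_sig (ch (hs n))).
Qed.

End Koenig.

Section Game.

Variables (G : mpglo) (l : strategy G).

Definition succ_of (g : F G) (s : Sig G) (S B : {set Q G}) : F G :=
  fun q => if q \in S then (if q \in B then PInf else minval g s q) else Bot.

Lemma successorE (g : F G) s f :
  successor g s f -> f = succ_of g s (supp f) [set q | isinf (f q)].
Proof.
case=> _ [_ f_val]; apply: functional_extensionality => q; rewrite /succ_of.
case: ifP => [supp_q | ]; last by rewrite inE; case: (f q).
by rewrite inE; case: (f_val q supp_q) => ->; first case: (minval g s q).
Qed.

Lemma succ_path_rcons (g : F G) (h : hist G) c :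
  succ_path g (rcons h c) -> successor (last g (map snd h)) c.1 c.2.
Proof.
elim: h g => [|[s f] h IH] g /=; first by case: c => s f [].
by case=> _ /IH.
Qed.

Definition move_code (h : hist G) (k : Sig G * {set Q G} * {set Q G}) :=
  (k.1.1, succ_of (last (@fI G) (map snd h)) k.1.1 k.1.2 k.2).

Definition legal_move (h : hist G) (c : Sig G * F G) := move_ok l h c.1 c.2.

Lemma legal_move_code h c : legal_move h c -> exists k, c = move_code h k.
Proof.
case: c => s f [_ [_ [[succ_h _] _]]].
exists (s, supp f, [set q | isinf (f q)]).
by rewrite /move_code /= -successorE //; apply: succ_path_rcons succ_h.
Qed.

Lemma consistent_valid h : consistent l h -> valid_hist legal_move h.
Proof. by move=> cons_h h1 [s f] h2 /cons_h. Qed.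

Lemma winning_no_infinite_play u : winning l -> ~ is_play l (InfPlay u).
Proof.
move=> win play_u.
have [n stop_n] : exists n, TE (mkseq u n) \/ TA (mkseq u n).
  by case: l win play_u => e win /win [n ?]; exists n; [left | right].
by case: (play_u n) => not_TE [not_TA _]; case: stop_n.
Qed.

End Game.

Theorem lemma2 (G : mpglo) (HG : wf_mpglo G) (l : strategy G) :
  winning l -> exists N : nat, forall p : play G, is_play l p -> play_len_le p N.
Proof.
move=> win; apply: NNPP => unbounded.
have [u play_u] : exists u, forall n, legal_move l (mkseq u n) (u n).
  apply: (extendable_path (@legal_move_code G l)) => n.
  apply: NNPP => no_ext; apply: unbounded; exists n.
  case=> [h [cons_h _] | u /(winning_no_infinite_play win) //].
  rewrite /= leqNgt; apply/negP => lt_n; apply: no_ext.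
  by exists h; [apply: consistent_valid | apply: ltnW].
exact: (winning_no_infinite_play win play_u).
Qed.
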